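(* Let $s$ be a schedule, $n\ge 2$, and $t_1,\dots,t_n$ distinct transactions of $s$. Suppose there are operations $p_k,q_k\in t_k$ ($k=1,\dots,n$), all accessing the same object $x$, such that $(p_k,q_{k+1})$ is a conflicting pair for $k=1,\dots,n-1$ and $(p_n,q_1)$ is a conflicting pair (so the conflict graph contains the cycle $t_1\to t_2\to\cdots\to t_n\to t_1$ with all edges on $x$). Then there exist two distinct transactions $t_a,t_b\in\{t_1,\dots,t_n\}$ such that the conflict graph contains both an edge on $x$ from $t_a$ to $t_b$ and an edge on $x$ from $t_b$ to $t_a$. *)

From mathcomp Require Import all_boot.
Set Implicit Arguments. Unset Strict Implicit. Unset Printing Implicit Defensive.

Inductive kind := Read | Write.

Record op := Op { op_tr : nat; op_kind : kind; op_obj : nat }.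

(* Operations of a schedule are identified with their positions
   (indices i < size s), so repeated identical operations stay distinct. *)
Definition schedule := seq op.

Definition op0 : op := Op 0 Read 0.
Definition at_ (s : schedule) (i : nat) : op := nth op0 s i.

Definition is_write (o : op) : bool :=
  match op_kind o with Write => true | Read => false end.

Definition conflicting (s : schedule) (i j : nat) : Prop :=
  [/\ i < j, j < size s,
      op_tr (at_ s i) <> op_tr (at_ s j),
      op_obj (at_ s i) = op_obj (at_ s j)
    & is_write (at_ s i) || is_write (at_ s j)].

Definition conflict_edge (s : schedule) (x a b : nat) : Prop :=
  exists i j, [/\ conflicting s i j, op_obj (at_ s i) = x,
                  op_tr (at_ s i) = a & op_tr (at_ s j) = b].

From mathcomp Require Import all_boot.
From mathcomp Require Import zify.

Set Implicit Arguments.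
Unset Strict Implicit.
Unset Printing Implicit Defensive.

(* Index the cycle t_0 -> t_1 -> ... -> t_(n-1) -> t_0 by residues
   mod n, so its edges are the conflicting pairs (p j, q (j+1 mod n)).  One of
   the operations of the pair (p 0, q 1) is a write w, issued by some t_k.  Every
   operation r on x of another transaction t_j conflicts with w, giving an edge
   t_j -> t_k if r precedes w and t_k -> t_j otherwise.  Call t_j "late" when p j
   comes after w.  Unless a two-way pair shows up along the way, lateness spreads
   along the cycle: t_(k+1) is late (otherwise t_(k+1) -> t_k closes a two-way
   pair with the cycle edge t_k -> t_(k+1)), and if t_j is late then
   w < p j < q (j+1), so t_(j+1) is late too (otherwise p (j+1) < w < q (j+1)
   puts t_(j+1) on both sides of w).  Hence the predecessor t_(k-1) of t_k is
   late: if w = p k this yields t_k -> t_(k-1) against the cycle edge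
   t_(k-1) -> t_k, and if w = q k it contradicts p (k-1) < q k = w. *)

Lemma modn_wrap (a n : nat) : n <= a -> a < n + n -> a %% n = a - n.
Proof.
move=> le_na lt_a2n.
rewrite -{1}(subnK le_na) modnDr modn_small //; lia.
Qed.

Lemma cycle_step_neq (n k d : nat) :
  k < n -> d.+1 < n -> (k.+1 + d) %% n <> k.
Proof.
move=> lt_kn lt_dn; case: (ltnP (k.+1 + d) n) => [small | big].
  by rewrite modn_small //; lia.
rewrite modn_wrap //; lia.
Qed.

Lemma cycle_step_onto (n k j : nat) :
  k < n -> j < n -> j <> k -> exists2 d, d.+1 < n & (k.+1 + d) %% n = j.
Proof.
move=> lt_kn lt_jn ne_jk; case: (ltnP k j) => [lt_kj | le_jk].
  by exists (j - k.+1); [lia | rewrite modn_small; lia].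
by exists (j + n - k.+1); [lia | rewrite modn_wrap; lia].
Qed.

Lemma succ_pred_cycle (n k : nat) :
  k < n -> ((k + n.-1) %% n).+1 %% n = k.
Proof.
move=> lt_kn; rewrite -addn1 modnDml -addnA addn1 prednK; last by lia.
by rewrite modnDr modn_small.
Qed.

Lemma pred_cycle_neq (n k : nat) : 1 < n -> k < n -> (k + n.-1) %% n <> k.
Proof.
move=> lt_1n lt_kn; case: (ltnP (k + n.-1) n) => [small | big].
  by rewrite modn_small //; lia.
rewrite modn_wrap //; lia.
Qed.

Lemma cycle_propagate (n k : nat) (P : nat -> Prop) :
  k < n -> P (k.+1 %% n) ->
  (forall j, j < n -> j <> k -> j.+1 %% n <> k -> P j -> P (j.+1 %% n)) ->
  forall j, j < n -> j <> k -> P j.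
Proof.
move=> lt_kn P_succ P_step j lt_jn ne_jk.
have P_walk : forall d, d.+1 < n -> P ((k.+1 + d) %% n).
  elim=> [|d IHd] lt_dn; first by rewrite addn0.
  have lt_d1n : d.+1 < n by lia.
  rewrite addnS -addn1 -modnDml addn1.
  apply: P_step (IHd lt_d1n).
  - by apply: ltn_pmod; lia.
  - exact: cycle_step_neq.
  - by rewrite -addn1 modnDml addn1 -addnS; exact: cycle_step_neq.
by have [d lt_dn <-] := cycle_step_onto lt_kn lt_jn ne_jk; exact: P_walk.
Qed.

Lemma write_conflicts (s : schedule) (r w : nat) :
  r < size s -> w < size s -> is_write (at_ s w) ->
  op_tr (at_ s r) <> op_tr (at_ s w) -> op_obj (at_ s r) = op_obj (at_ s w) ->
  (r < w -> conflicting s r w) /\ (w < r -> conflicting s w r).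
Proof.
move=> r_size w_size w_write ne_tr eq_obj; split=> lt_rw; split => //.
- by rewrite w_write orbT.
- by move/esym.
- by rewrite w_write.
Qed.

Definition two_way_pair (s : schedule) (n x : nat) (t : nat -> nat) : Prop :=
  exists a b, [/\ a < n, b < n, t a <> t b,
                  conflict_edge s x (t a) (t b) & conflict_edge s x (t b) (t a)].

Section ConflictCycle.

Variables (s : schedule) (n x : nat) (t p q : nat -> nat).
Hypothesis n_gt1 : 1 < n.
Hypothesis t_inj : forall i j, i < n -> j < n -> t i = t j -> i = j.
Hypothesis ops_size : forall k, k < n -> p k < size s /\ q k < size s.
Hypothesis ops_tr :
  forall k, k < n -> op_tr (at_ s (p k)) = t k /\ op_tr (at_ s (q k)) = t k.
Hypothesis ops_obj :
  forall k, k < n -> op_obj (at_ s (p k)) = x /\ op_obj (at_ s (q k)) = x.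
Hypothesis cycle_conflict :
  forall j, j < n -> conflicting s (p j) (q (j.+1 %% n)).

Local Notation succ j := (j.+1 %% n).
Local Notation two_way := (two_way_pair s n x t).

Lemma succ_lt (j : nat) : succ j < n.
Proof. by apply: ltn_pmod; lia. Qed.

Lemma t_neq (i j : nat) : i < n -> j < n -> i <> j -> t i <> t j.
Proof. by move=> lt_in lt_jn ne_ij /t_inj; auto. Qed.

Lemma cycle_edge (j : nat) : j < n -> conflict_edge s x (t j) (t (succ j)).
Proof.
move=> lt_jn; exists (p j), (q (succ j)); split.
- exact: cycle_conflict.
- by case: (ops_obj lt_jn).
- by case: (ops_tr lt_jn).
- by case: (ops_tr (succ_lt j)).
Qed.

Lemma two_way_of_edges (a b : nat) : a < n -> b < n -> a <> b ->
  conflict_edge s x (t a) (t b) -> conflict_edge s x (t b) (t a) -> two_way.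
Proof. by move=> lt_an lt_bn ne_ab eab eba; exists a, b; split => //; exact: t_neq. Qed.

Section Write.

Variables (k w : nat).
Hypothesis lt_kn : k < n.
Hypothesis w_size : w < size s.
Hypothesis w_write : is_write (at_ s w).
Hypothesis w_tr : op_tr (at_ s w) = t k.
Hypothesis w_obj : op_obj (at_ s w) = x.

Lemma write_edges (j r : nat) :
  j < n -> j <> k -> r < size s -> op_tr (at_ s r) = t j -> op_obj (at_ s r) = x ->
  [/\ r <> w, r < w -> conflict_edge s x (t j) (t k)
            & w < r -> conflict_edge s x (t k) (t j)].
Proof.
move=> lt_jn ne_jk r_size r_tr r_obj.
have ne_tr : op_tr (at_ s r) <> op_tr (at_ s w) by rewrite r_tr w_tr; exact: t_neq.
have [conf_rw conf_wr] := write_conflicts r_size w_size w_write ne_tr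
                                          (etrans r_obj (esym w_obj)).
split.
- by move=> eq_rw; apply: ne_tr; rewrite eq_rw.
- by move=> lt_rw; exists r, w; split => //; apply: conf_rw.
- by move=> lt_wr; exists w, r; split => //; apply: conf_wr.
Qed.

Lemma p_edges (j : nat) : j < n -> j <> k ->
  [/\ ~~ (w < p j) -> conflict_edge s x (t j) (t k)
    & w < p j -> conflict_edge s x (t k) (t j)].
Proof.
move=> lt_jn ne_jk.
have [pj_size _] := ops_size lt_jn.
have [pj_tr _] := ops_tr lt_jn.
have [pj_obj _] := ops_obj lt_jn.
have [ne_pw before after] := write_edges lt_jn ne_jk pj_size pj_tr pj_obj.
split=> [not_after|]; last exact: after.
by apply: before; lia.
Qed.

Lemma late_succ : two_way \/ w < p (succ k).
Proof.
have ne_sk : succ k <> k by rewrite -[k.+1]addn0; exact: cycle_step_neq.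
have [before _] := p_edges (succ_lt k) ne_sk.
case: (boolP (w < p (succ k))) => [late | not_late]; [by right | left].
exact: two_way_of_edges lt_kn (succ_lt k) (nesym ne_sk) (cycle_edge lt_kn)
                        (before not_late).
Qed.

(* Lateness of t_j passes to t_(j+1), unless there is a two-way pair:
   w < p j < q (j+1), so t_(j+1) would otherwise lie on both sides of w. *)
Lemma late_step (j : nat) : j < n -> j <> k -> succ j <> k ->
  two_way \/ w < p j -> two_way \/ w < p (succ j).
Proof.
move=> lt_jn ne_jk ne_sjk [|late_j]; first by left.
have lt_sn := succ_lt j.
have [p_before _] := p_edges lt_sn ne_sjk.
case: (boolP (w < p (succ j))) => [late | not_late]; [by right | left].
have [_ q_size] := ops_size lt_sn.
have [_ q_tr] := ops_tr lt_sn.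
have [_ q_obj] := ops_obj lt_sn.
have [_ _ q_after] := write_edges lt_sn ne_sjk q_size q_tr q_obj.
have [lt_pq _ _ _ _] := cycle_conflict lt_jn.
apply: two_way_of_edges lt_kn lt_sn (nesym ne_sjk) _ (p_before not_late).
by apply: q_after; exact: ltn_trans late_j lt_pq.
Qed.

Lemma all_late (j : nat) : j < n -> j <> k -> two_way \/ w < p j.
Proof.
exact: (cycle_propagate (P := fun j => two_way \/ w < p j) lt_kn late_succ
                        late_step).
Qed.

(* The predecessor of t_k being late closes the cycle into a two-way pair. *)
Lemma two_way_of_write : w = p k \/ w = q k -> two_way.
Proof.
set k' := (k + n.-1) %% n.
have lt_k'n : k' < n by apply: ltn_pmod; lia.
have ne_k'k : k' <> k by exact: pred_cycle_neq.
have succ_k' : succ k' = k by exact: succ_pred_cycle.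
move=> w_op; case: (all_late lt_k'n ne_k'k) => [// | late].
have [_ after] := p_edges lt_k'n ne_k'k.
have back_edge := cycle_edge lt_k'n; rewrite succ_k' in back_edge.
case: w_op => [w_p | w_q].
  exact: two_way_of_edges lt_kn lt_k'n (nesym ne_k'k) (after late) back_edge.
have [lt_pq _ _ _ _] := cycle_conflict lt_k'n.
by move: lt_pq; rewrite succ_k' -w_q => /(ltn_trans late); rewrite ltnn.
Qed.

End Write.

Theorem cycle_two_way : two_way.
Proof.
have lt_0n : 0 < n by lia.
have lt_s0n := succ_lt 0.
have [_ _ _ _ has_write] := cycle_conflict lt_0n.
case/orP: has_write => [p_write | q_write].
- have [p_size _] := ops_size lt_0n.
  have [p_tr _] := ops_tr lt_0n.
  have [p_obj _] := ops_obj lt_0n.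
  by apply: (two_way_of_write lt_0n p_size p_write p_tr p_obj); left.
- have [_ q_size] := ops_size lt_s0n.
  have [_ q_tr] := ops_tr lt_s0n.
  have [_ q_obj] := ops_obj lt_s0n.
  by apply: (two_way_of_write lt_s0n q_size q_write q_tr q_obj); right.
Qed.

End ConflictCycle.

(* Transactions t_1..t_n are t 0 .. t (n-1); p k, q k are positions in s. *)
Theorem theorem2 (s : schedule) (n : nat) (x : nat)
  (t : nat -> nat) (p q : nat -> nat) :
  2 <= n ->
  (forall i j, i < n -> j < n -> t i = t j -> i = j) ->
  (forall k, k < n -> p k < size s /\ q k < size s) ->
  (forall k, k < n -> op_tr (at_ s (p k)) = t k /\ op_tr (at_ s (q k)) = t k) ->
  (forall k, k < n -> op_obj (at_ s (p k)) = x /\ op_obj (at_ s (q k)) = x) ->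
  (forall k, k.+1 < n -> conflicting s (p k) (q k.+1)) ->
  conflicting s (p n.-1) (q 0) ->
  exists a b, [/\ a < n, b < n, t a <> t b,
                  conflict_edge s x (t a) (t b) & conflict_edge s x (t b) (t a)].
Proof.
move=> n_gt1 t_inj ops_size ops_tr ops_obj conf_next conf_last.
apply: (cycle_two_way n_gt1 t_inj ops_size ops_tr ops_obj) => j lt_jn.
case: (ltnP j.+1 n) => [lt_j1n | le_nj1].
  by rewrite modn_small //; exact: conf_next.
have -> : j = n.-1 by lia.
by rewrite prednK ?modnn //; lia.
Qed.
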